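(* Let $e,m_+,T_+,T_->0$. There exist constants $0<C_1\le C_1'$ and $0<C_2\le C_2'$, depending only on $e,m_+,T_+,T_-$ (in particular independent of $k,\xi$), such that for every $k\in\mathbb{Z}\setminus\{0\}$, $\xi\in\mathbb{R}$ and every solution $A(t)=(A_1(t),A_2(t))^\top\in\mathbb{C}^2$ of $\frac{d}{dt}A=L_+(t)A$ on $[0,\infty)$, the functional $$\mathcal{E}_+(t)=\sqrt{\tfrac{p_1}{m_1}}|A_1|^2+2\frac{h_1}{\sqrt{m_1p_1}}\Re(A_1\bar A_2)+\sqrt{\tfrac{m_1}{p_1}}|A_2|^2$$ satisfies, for all $t\ge0$, $$C_1\mathcal{E}_+(0)\le\mathcal{E}_+(t)\le C_1'\mathcal{E}_+(0),\qquad C_2|A(0)|\le|A(t)|\le C_2'|A(0)|.$$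
   Context: For fixed $k\in\mathbb{Z}\setminus\{0\}$, $\xi\in\mathbb{R}$ let $\alpha(t)=k^2+(\xi-kt)^2$, so $\partial_t\alpha=-2k(\xi-kt)$. Define $h_1(t)=\frac14\alpha^{-1}\partial_t\alpha$, $m_1(t)=\sqrt{\frac{T_+}{m_+}}\alpha^{1/2}$, $p_1(t)=\frac{4\pi e^2}{\sqrt{m_+T_+}}\frac{\alpha^{1/2}}{\alpha+4\pi e^2/T_-}+\sqrt{\frac{m_+}{T_+}}\frac{2k^2}{\alpha^{3/2}}+\sqrt{\frac{T_+}{m_+}}\alpha^{1/2}$, and $$L_+(t)=\begin{pmatrix}-h_1(t) & -m_1(t)\\ p_1(t) & h_1(t)\end{pmatrix}.$$ (This is the Fourier-side symmetrized form, in the sheared coordinates $X=x-yt$, $Y=y$, of the linearized ion Euler–Poisson system around the Couette flow.) *)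

From Stdlib Require Import Reals.
From Coquelicot Require Import Coquelicot.
Open Scope R_scope.

(* Parameters: e (charge), mp = m_+, Tp = T_+, Tm = T_-; frequency k (integer), xi real. *)
Definition alpha (k : Z) (xi t : R) : R := (IZR k) ^ 2 + (xi - IZR k * t) ^ 2.
Definition dalpha (k : Z) (xi t : R) : R := - 2 * IZR k * (xi - IZR k * t).

Definition h1 (k : Z) (xi t : R) : R := / 4 * / alpha k xi t * dalpha k xi t.

Definition m1 (mp Tp : R) (k : Z) (xi t : R) : R :=
  sqrt (Tp / mp) * sqrt (alpha k xi t).

Definition p1 (e mp Tp Tm : R) (k : Z) (xi t : R) : R :=
  4 * PI * e ^ 2 / sqrt (mp * Tp)
    * (sqrt (alpha k xi t) / (alpha k xi t + 4 * PI * e ^ 2 / Tm))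
  + sqrt (mp / Tp) * (2 * (IZR k) ^ 2 / (sqrt (alpha k xi t) ^ 3))
  + sqrt (Tp / mp) * sqrt (alpha k xi t).

Definition is_solution (e mp Tp Tm : R) (k : Z) (xi : R) (A1 A2 : R -> C) : Prop :=
  (forall t, 0 < t ->
     is_derive A1 t (Cplus (Cmult (RtoC (- h1 k xi t)) (A1 t))
                           (Cmult (RtoC (- m1 mp Tp k xi t)) (A2 t))) /\
     is_derive A2 t (Cplus (Cmult (RtoC (p1 e mp Tp Tm k xi t)) (A1 t))
                           (Cmult (RtoC (h1 k xi t)) (A2 t)))) /\
  filterlim A1 (at_right 0) (locally (A1 0)) /\
  filterlim A2 (at_right 0) (locally (A2 0)).

Definition Energy_plus (e mp Tp Tm : R) (k : Z) (xi : R) (A1 A2 : R -> C) (t : R) : R :=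
  let m := m1 mp Tp k xi t in
  let p := p1 e mp Tp Tm k xi t in
  sqrt (p / m) * (Cmod (A1 t)) ^ 2
  + 2 * h1 k xi t / sqrt (m * p) * Re (Cmult (A1 t) (Cconj (A2 t)))
  + sqrt (m / p) * (Cmod (A2 t)) ^ 2.

Definition normA (A1 A2 : R -> C) (t : R) : R :=
  sqrt ((Cmod (A1 t)) ^ 2 + (Cmod (A2 t)) ^ 2).

From Stdlib Require Import Reals Lra Psatz ZArith.
From Coquelicot Require Import Coquelicot.
Open Scope R_scope.

(* Write p = p_1, m = m_1, h = h_1, so that E_+ = r |A_1|^2 + S Re(A_1 conj A_2) + w |A_2|^2
   with r = sqrt(p/m), w = sqrt(m/p) and S = 2h/sqrt(mp).  The identities r m = w p,
   S p = 2h r and S m = 2h w make the contribution of L_+ to dE_+/dt cancel: only the time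
   derivatives of the weights remain.  Since r w = 1 and S^2 <= 1, E_+ is comparable to
   r |A_1|^2 + w |A_2|^2, hence (as 1 <= r <= const) to |A|^2.  Both p/m and mp are rational
   functions of alpha, and r'/r, w'/w and S' are bounded by K k^2/alpha with K independent of
   k and xi.  As k^2/alpha is the derivative of -atan((xi - k t)/k), its integral over [0, oo)
   is at most pi, and Gronwall's lemma keeps E_+(t) within a factor exp(K pi) of E_+(0). *)

Ltac positivity_rec :=
  first [ lra
        | apply Rmult_lt_0_compat; positivity_rec
        | apply Rplus_lt_0_compat; positivity_rec
        | apply Rinv_0_lt_compat; positivity_rec
        | apply pow_lt; positivity_rec
        | apply sqrt_lt_R0; positivity_rec ].

Ltac positivity := repeat split; try apply Rgt_not_eq; positivity_rec.

Lemma exp_le_compat (x y : R) : x <= y -> exp x <= exp y.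
Proof.
  intros [Hlt | ->]; [now apply Rlt_le, exp_increasing | apply Rle_refl].
Qed.

Lemma Rdiv_le_cross (x y u v : R) : 0 < y -> 0 < v -> x * v <= u * y -> x / y <= u / v.
Proof.
  intros Hy Hv H; apply Rle_div_l; [lra |].
  replace (u / v * y) with (u * y / v) by (field; lra); apply Rle_div_r; lra.
Qed.

Lemma Rinv_le_self (x : R) : 1 <= x -> 0 < / x <= x.
Proof.
  intros Hx; split; [apply Rinv_0_lt_compat; lra |].
  apply Rle_trans with 1; [rewrite <- Rinv_1; apply Rinv_le_contravar |]; lra.
Qed.

Lemma Rinv_mul_le (G x y : R) : 0 < G -> x <= G * y -> / G * x <= y.
Proof.
  intros HG H; apply Rmult_le_reg_l with G; [exact HG |].
  rewrite <- Rmult_assoc, Rinv_r, Rmult_1_l by lra; exact H.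
Qed.

Lemma abs_deriv_sqrt_le (X dX L : R) :
  1 <= X -> Rabs dX <= L -> Rabs (dX / (2 * sqrt X)) <= L / 2 * sqrt X.
Proof.
  intros HX HdX.
  assert (Hs : 1 <= sqrt X) by (rewrite <- sqrt_1; apply sqrt_le_1_alt; lra).
  unfold Rdiv; rewrite Rabs_mult, Rabs_inv, (Rabs_right (2 * sqrt X)) by lra.
  apply Rle_trans with (L * / (2 * sqrt X)).
  - apply Rmult_le_compat_r; [apply Rlt_le, Rinv_0_lt_compat |]; lra.
  - pose proof (Rabs_pos dX).
    replace (L * / 2 * sqrt X) with (L * / (2 * sqrt X) * (sqrt X * sqrt X)) by (field; lra).
    assert (0 <= L * / (2 * sqrt X))
      by (apply Rmult_le_pos; [lra | apply Rlt_le, Rinv_0_lt_compat; lra]).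
    assert (1 <= sqrt X * sqrt X) by nra.
    nra.
Qed.

Lemma abs_deriv_inv_le (y dy rho : R) :
  0 < y -> Rabs dy <= rho * y -> Rabs (- dy / y ^ 2) <= rho * / y.
Proof.
  intros Hy Hdy.
  replace (- dy / y ^ 2) with (- dy * / y * / y) by (field; lra).
  rewrite !Rabs_mult, Rabs_Ropp, !Rabs_inv, (Rabs_right y) by lra.
  apply Rmult_le_compat_r; [apply Rlt_le, Rinv_0_lt_compat; lra |].
  apply Rle_trans with (rho * y * / y); [| right; field; lra].
  apply Rmult_le_compat_r; [apply Rlt_le, Rinv_0_lt_compat |]; lra.
Qed.

Lemma sqrt_comparison_transfer (Rm G n0 nt E0 Et : R) :
  0 <= Rm -> 0 <= G -> 0 <= n0 ->
  nt <= 2 * Rm * Et -> 2 * E0 <= 3 * Rm * n0 -> Et <= G * E0 ->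
  sqrt nt <= sqrt (3 * G) * Rm * sqrt n0.
Proof.
  intros HRm HG Hn0 Ht H0 HE.
  rewrite <- (sqrt_pow2 Rm HRm), Rmult_assoc, <- !sqrt_mult by (try apply pow2_ge_0; nra).
  apply sqrt_le_1_alt.
  assert (2 * Rm * Et <= Rm * G * (2 * E0)) by nra.
  assert (Rm * G * (2 * E0) <= Rm * G * (3 * Rm * n0)) by (apply Rmult_le_compat_l; nra).
  nra.
Qed.

(** * Gronwall's lemma on [0, oo) *)

Definition right_cont0 (f : R -> R) : Prop := filterlim f (at_right 0) (locally (f 0)).

Lemma right_cont0_ext (f g : R -> R) : (forall t, f t = g t) -> right_cont0 f -> right_cont0 g.
Proof.
  intros Hfg Hf; unfold right_cont0; rewrite <- Hfg.
  eapply filterlim_ext; [exact Hfg | exact Hf].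
Qed.

Lemma right_cont0_plus (f g : R -> R) :
  right_cont0 f -> right_cont0 g -> right_cont0 (fun t => f t + g t).
Proof.
  intros Hf Hg; eapply filterlim_comp_2; [exact Hf | exact Hg | exact (filterlim_plus (f 0) (g 0))].
Qed.

Lemma right_cont0_mult (f g : R -> R) :
  right_cont0 f -> right_cont0 g -> right_cont0 (fun t => f t * g t).
Proof.
  intros Hf Hg; eapply filterlim_comp_2;
    [exact Hf | exact Hg | exact (@filterlim_mult R_AbsRing (f 0) (g 0))].
Qed.

Lemma right_cont0_opp (f : R -> R) : right_cont0 f -> right_cont0 (fun t => - f t).
Proof. intros Hf; eapply filterlim_comp; [exact Hf | exact (filterlim_opp (f 0))]. Qed.

Lemma ex_derive_right_cont0 (f : R -> R) : ex_derive f 0 -> right_cont0 f.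
Proof.
  intros Hf; eapply filterlim_filter_le_1; [apply filter_le_within |].
  exact (ex_derive_continuous (K := R_AbsRing) (V := R_NormedModule) f 0 Hf).
Qed.

Lemma nonincreasing_from_0 (g dg : R -> R) :
  (forall t, 0 < t -> is_derive g t (dg t)) -> (forall t, 0 < t -> dg t <= 0) ->
  right_cont0 g -> forall t, 0 <= t -> g t <= g 0.
Proof.
  intros Hder Hneg Hrc t [Ht | <-]; [| apply Rle_refl].
  assert (Hmono : forall s, 0 < s < t -> g t <= g s).
  { intros s Hs.
    destruct (MVT_gen g s t dg) as [x [Hx Hmvt]];
      rewrite ?Rmin_left, ?Rmax_right in * by lra.
    - intros x Hx; apply Hder; lra.
    - intros x Hx; apply continuity_pt_filterlim.
      apply (ex_derive_continuous (K := R_AbsRing) (V := R_NormedModule)).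
      exists (dg x); apply Hder; lra.
    - assert (dg x <= 0) by (apply Hneg; lra). nra. }
  apply (filterlim_le (F := at_right 0) (fun _ => g t) g (g t) (g 0));
    [| apply filterlim_const | exact Hrc].
  exists (mkposreal t Ht); intros s Hs Hpos; apply Hmono; split; [exact Hpos |].
  apply Rabs_lt_between' in Hs; simpl in Hs; unfold minus, plus, opp in Hs; simpl in Hs; lra.
Qed.

Lemma gronwall_exp_weights (f df P dP : R -> R) :
  (forall t, 0 < t -> is_derive f t (df t)) -> (forall t, is_derive P t (dP t)) ->
  (forall t, 0 < t -> Rabs (df t) <= dP t * f t) -> right_cont0 f ->
  forall t, 0 <= t ->
  f t * exp (-1 * P t) <= f 0 * exp (-1 * P 0) /\ f 0 * exp (1 * P 0) <= f t * exp (1 * P t).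
Proof.
  intros Hf HP Hbound Hrc t Ht.
  assert (Hexp : forall sg s, is_derive (fun s => exp (sg * P s)) s (sg * dP s * exp (sg * P s))).
  { intros sg s.
    apply (is_derive_comp exp (fun s => sg * P s)); [apply is_derive_exp |].
    now apply is_derive_scal. }
  assert (Hweighted : forall sg s, 0 < s -> is_derive (fun s => f s * exp (sg * P s)) s
                      (df s * exp (sg * P s) + f s * (sg * dP s * exp (sg * P s)))).
  { intros sg s Hs.
    apply (is_derive_mult f (fun s => exp (sg * P s)));
      [now apply Hf | apply Hexp | intros; apply Rmult_comm]. }
  assert (Hcont : forall sg, right_cont0 (fun s => f s * exp (sg * P s))).
  { intros sg; apply right_cont0_mult; [exact Hrc |].
    apply ex_derive_right_cont0; eexists; apply Hexp. }
  split.
  - apply (nonincreasing_from_0 _ _ (fun s Hs => Hweighted (-1) s Hs));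
      [| exact (Hcont (-1)) | exact Ht].
    intros s Hs. specialize (Hbound s Hs). pose proof (Rle_abs (df s)).
    pose proof (exp_pos (-1 * P s)). nra.
  - apply Ropp_le_cancel.
    apply (nonincreasing_from_0 (fun s => - (f s * exp (1 * P s)))
             (fun s => - (df s * exp (1 * P s) + f s * (1 * dP s * exp (1 * P s)))));
      [| | | exact Ht].
    + intros s Hs; apply (is_derive_opp (fun s => f s * exp (1 * P s))), Hweighted, Hs.
    + intros s Hs. specialize (Hbound s Hs). pose proof (Rle_abs (- df s)).
      rewrite Rabs_Ropp in *. pose proof (exp_pos (1 * P s)). nra.
    + apply right_cont0_opp, Hcont.
Qed.

Lemma gronwall_two_sided (f df P dP : R -> R) (V : R) :
  (forall t, 0 < t -> is_derive f t (df t)) -> (forall t, is_derive P t (dP t)) ->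
  (forall t, 0 < t -> Rabs (df t) <= dP t * f t) -> right_cont0 f ->
  (forall t, 0 <= f t) -> (forall t, 0 <= t -> P t - P 0 <= V) ->
  forall t, 0 <= t -> f t <= exp V * f 0 /\ f 0 <= exp V * f t.
Proof.
  intros Hf HP Hbound Hrc Hpos HV t Ht.
  destruct (gronwall_exp_weights f df P dP Hf HP Hbound Hrc t Ht) as [Hdecay Hgrowth].
  assert (Hup : f t <= f 0 * exp (P t - P 0)).
  { apply (Rmult_le_compat_r (exp (P t))) in Hdecay; [| apply Rlt_le, exp_pos].
    rewrite !Rmult_assoc, <- !exp_plus in Hdecay.
    replace (-1 * P t + P t) with 0 in Hdecay by ring.
    replace (-1 * P 0 + P t) with (P t - P 0) in Hdecay by ring.
    rewrite exp_0, Rmult_1_r in Hdecay; exact Hdecay. }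
  assert (Hlow : f 0 <= f t * exp (P t - P 0)).
  { apply (Rmult_le_compat_r (exp (- P 0))) in Hgrowth; [| apply Rlt_le, exp_pos].
    rewrite !Rmult_assoc, <- !exp_plus in Hgrowth.
    replace (1 * P 0 + - P 0) with 0 in Hgrowth by ring.
    replace (1 * P t + - P 0) with (P t - P 0) in Hgrowth by ring.
    rewrite exp_0, Rmult_1_r in Hgrowth; exact Hgrowth. }
  pose proof (exp_le_compat _ _ (HV t Ht)); pose proof (Hpos 0); pose proof (Hpos t).
  split; nra.
Qed.

(** * Hermitian forms on C^2 *)

Definition hform (r S w : R) (z1 z2 : C) : R :=
  r * Cmod z1 ^ 2 + S * Re (z1 * Cconj z2) + w * Cmod z2 ^ 2.

Lemma hform_components (r S w : R) (z1 z2 : C) :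
  hform r S w z1 z2 = r * (Re z1 ^ 2 + Im z1 ^ 2) + S * (Re z1 * Re z2 + Im z1 * Im z2)
                      + w * (Re z2 ^ 2 + Im z2 ^ 2).
Proof.
  unfold hform; rewrite !Cmod2_alt; destruct z1, z2; unfold Re, Im; simpl; ring.
Qed.

Lemma Re_mul_conj_bound (r w : R) (z1 z2 : C) : 0 < r -> r * w = 1 ->
  2 * Rabs (Re (z1 * Cconj z2)) <= r * Cmod z1 ^ 2 + w * Cmod z2 ^ 2.
Proof.
  intros Hr Hrw; rewrite !Cmod2_alt; destruct z1 as [a1 b1], z2 as [a2 b2]; unfold Re, Im; simpl.
  assert (Hw : w = / r) by (apply Rmult_eq_reg_l with r; [rewrite Hrw; field |]; lra).
  subst w.
  assert (Hminus : r * ((a1 - a2 / r) ^ 2 + (b1 - b2 / r) ^ 2)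
          = r * (a1 ^ 2 + b1 ^ 2) + / r * (a2 ^ 2 + b2 ^ 2) - 2 * (a1 * a2 + b1 * b2))
    by (field; lra).
  assert (Hplus : r * ((a1 + a2 / r) ^ 2 + (b1 + b2 / r) ^ 2)
          = r * (a1 ^ 2 + b1 ^ 2) + / r * (a2 ^ 2 + b2 ^ 2) + 2 * (a1 * a2 + b1 * b2))
    by (field; lra).
  assert (0 <= r * ((a1 - a2 / r) ^ 2 + (b1 - b2 / r) ^ 2))
    by (apply Rmult_le_pos; [lra | apply Rplus_le_le_0_compat; apply pow2_ge_0]).
  assert (0 <= r * ((a1 + a2 / r) ^ 2 + (b1 + b2 / r) ^ 2))
    by (apply Rmult_le_pos; [lra | apply Rplus_le_le_0_compat; apply pow2_ge_0]).
  replace (a1 * a2 - b1 * - b2) with (a1 * a2 + b1 * b2) by ring.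
  assert (Rabs (a1 * a2 + b1 * b2)
          <= (r * (a1 ^ 2 + b1 ^ 2) + / r * (a2 ^ 2 + b2 ^ 2)) / 2) by (apply Rabs_le; lra).
  simpl in *; lra.
Qed.

Lemma hform_bounds (r S w : R) (z1 z2 : C) : 0 < r -> r * w = 1 -> S ^ 2 <= 1 ->
  (r * Cmod z1 ^ 2 + w * Cmod z2 ^ 2) / 2 <= hform r S w z1 z2
  <= 3 * (r * Cmod z1 ^ 2 + w * Cmod z2 ^ 2) / 2.
Proof.
  intros Hr Hrw HS; pose proof (Re_mul_conj_bound r w z1 z2 Hr Hrw) as Hx.
  assert (Rabs (S * Re (z1 * Cconj z2)) <= (r * Cmod z1 ^ 2 + w * Cmod z2 ^ 2) / 2).
  { rewrite Rabs_mult; apply Rle_trans with (1 * Rabs (Re (z1 * Cconj z2))); [| lra].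
    apply Rmult_le_compat_r; [apply Rabs_pos | apply Rabs_le; nra]. }
  apply Rabs_le_between in H; unfold hform; lra.
Qed.

Lemma hform_rate_bound (r S w dr dS dw rho sigma : R) (z1 z2 : C) :
  0 < r -> r * w = 1 -> S ^ 2 <= 1 ->
  Rabs dr <= rho * r -> Rabs dw <= rho * w -> Rabs dS <= sigma ->
  Rabs (hform dr dS dw z1 z2) <= (2 * rho + sigma) * hform r S w z1 z2.
Proof.
  intros Hr Hrw HS Hdr Hdw HdS.
  pose proof (Re_mul_conj_bound r w z1 z2 Hr Hrw) as Hx.
  pose proof (hform_bounds r S w z1 z2 Hr Hrw HS) as [HE _].
  assert (Hw : 0 < w) by nra.
  assert (0 <= rho) by (pose proof (Rabs_pos dr); nra).
  pose proof (Rabs_pos dS); pose proof (Rabs_pos (Re (z1 * Cconj z2))).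
  pose proof (pow2_ge_0 (Cmod z1)); pose proof (pow2_ge_0 (Cmod z2)).
  unfold hform at 1; eapply Rle_trans; [apply Rabs_triang |].
  eapply Rle_trans; [apply Rplus_le_compat_r, Rabs_triang |].
  rewrite !Rabs_mult, !(Rabs_right (_ ^ 2)) by (apply Rle_ge, pow2_ge_0).
  assert (Rabs dS * Rabs (Re (z1 * Cconj z2))
          <= sigma * ((r * Cmod z1 ^ 2 + w * Cmod z2 ^ 2) / 2)) by (apply Rmult_le_compat; lra).
  nra.
Qed.

Lemma hform_norm_equiv (r S w Rm : R) (z1 z2 : C) :
  1 <= r -> r <= Rm -> r * w = 1 -> S ^ 2 <= 1 ->
  Cmod z1 ^ 2 + Cmod z2 ^ 2 <= 2 * Rm * hform r S w z1 z2 /\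
  2 * hform r S w z1 z2 <= 3 * Rm * (Cmod z1 ^ 2 + Cmod z2 ^ 2).
Proof.
  intros Hr1 HrR Hrw HS.
  destruct (hform_bounds r S w z1 z2 ltac:(lra) Hrw HS) as [Hlo Hhi].
  pose proof (pow2_ge_0 (Cmod z1)); pose proof (pow2_ge_0 (Cmod z2)).
  assert (Hw : 0 < w) by nra.
  assert (Hw1 : w <= 1) by nra.
  assert (HRw : 1 <= Rm * w) by nra.
  split; nra.
Qed.

Lemma is_derive_Re (z : R -> C) (t : R) (dz : C) :
  is_derive z t dz -> is_derive (fun s => Re (z s)) t (Re dz).
Proof.
  intros Hz; eapply filterdiff_ext_lin.
  - apply (filterdiff_comp' z (fun u : C => Re u));
      [exact Hz | apply filterdiff_linear, is_linear_fst].
  - reflexivity.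
Qed.

Lemma is_derive_Im (z : R -> C) (t : R) (dz : C) :
  is_derive z t dz -> is_derive (fun s => Im (z s)) t (Im dz).
Proof.
  intros Hz; eapply filterdiff_ext_lin.
  - apply (filterdiff_comp' z (fun u : C => Im u));
      [exact Hz | apply filterdiff_linear, is_linear_snd].
  - reflexivity.
Qed.

Lemma is_derive_Re_mul_conj (z1 z2 : R -> C) (t : R) (dz1 dz2 : C) :
  is_derive z1 t dz1 -> is_derive z2 t dz2 ->
  is_derive (fun s => Re (z1 s * Cconj (z2 s))) t (Re (dz1 * Cconj (z2 t) + z1 t * Cconj dz2)).
Proof.
  intros Hz1 Hz2.
  apply is_derive_ext with (fun s => Re (z1 s) * Re (z2 s) + Im (z1 s) * Im (z2 s)).
  { intros s; destruct (z1 s), (z2 s); unfold Re, Im; simpl; ring. }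
  replace (Re (dz1 * Cconj (z2 t) + z1 t * Cconj dz2))
    with (Re dz1 * Re (z2 t) + Re (z1 t) * Re dz2 + (Im dz1 * Im (z2 t) + Im (z1 t) * Im dz2))
    by (destruct dz1, dz2, (z1 t), (z2 t); unfold Re, Im; simpl; ring).
  apply (is_derive_plus (fun s => Re (z1 s) * Re (z2 s)) (fun s => Im (z1 s) * Im (z2 s)));
    apply (is_derive_mult (fun s => _ (z1 s)) (fun s => _ (z2 s)));
    try apply is_derive_Re; try apply is_derive_Im; try assumption; intros; apply Rmult_comm.
Qed.

Lemma is_derive_hform (r S w : R -> R) (z1 z2 : R -> C) (t dr dS dw : R) (dz1 dz2 : C) :
  is_derive r t dr -> is_derive S t dS -> is_derive w t dw ->
  is_derive z1 t dz1 -> is_derive z2 t dz2 ->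
  is_derive (fun s => hform (r s) (S s) (w s) (z1 s) (z2 s)) t
    (hform dr dS dw (z1 t) (z2 t) + 2 * r t * Re (dz1 * Cconj (z1 t))
     + S t * Re (dz1 * Cconj (z2 t) + z1 t * Cconj dz2) + 2 * w t * Re (dz2 * Cconj (z2 t))).
Proof.
  intros Hr HS Hw Hz1 Hz2.
  assert (Hsq : forall z : C, Cmod z ^ 2 = Re (z * Cconj z))
    by (intros [a b]; rewrite Cmod2_alt; unfold Re, Im; simpl; ring).
  assert (Hre : forall z dz : C, Re (dz * Cconj z + z * Cconj dz) = 2 * Re (dz * Cconj z))
    by (intros [a b] [da db]; unfold Re; simpl; ring).
  apply is_derive_ext with (fun s => r s * Re (z1 s * Cconj (z1 s))
     + S s * Re (z1 s * Cconj (z2 s)) + w s * Re (z2 s * Cconj (z2 s))).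
  { intros s; unfold hform; rewrite !Hsq; reflexivity. }
  pose proof (is_derive_Re_mul_conj z1 z1 t dz1 dz1 Hz1 Hz1) as H11; rewrite Hre in H11.
  pose proof (is_derive_Re_mul_conj z1 z2 t dz1 dz2 Hz1 Hz2) as H12.
  pose proof (is_derive_Re_mul_conj z2 z2 t dz2 dz2 Hz2 Hz2) as H22; rewrite Hre in H22.
  replace (hform dr dS dw (z1 t) (z2 t) + 2 * r t * Re (dz1 * Cconj (z1 t))
     + S t * Re (dz1 * Cconj (z2 t) + z1 t * Cconj dz2) + 2 * w t * Re (dz2 * Cconj (z2 t)))
    with (dr * Re (z1 t * Cconj (z1 t)) + r t * (2 * Re (dz1 * Cconj (z1 t)))
          + (dS * Re (z1 t * Cconj (z2 t)) + S t * Re (dz1 * Cconj (z2 t) + z1 t * Cconj dz2))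
          + (dw * Re (z2 t * Cconj (z2 t)) + w t * (2 * Re (dz2 * Cconj (z2 t)))))
    by (unfold hform; rewrite !Hsq; ring).
  apply (is_derive_plus (fun s => r s * Re (z1 s * Cconj (z1 s)) + S s * Re (z1 s * Cconj (z2 s)))
                        (fun s => w s * Re (z2 s * Cconj (z2 s))));
    [apply (is_derive_plus (fun s => r s * Re (z1 s * Cconj (z1 s)))
                           (fun s => S s * Re (z1 s * Cconj (z2 s)))) |];
    apply (is_derive_mult _ (fun s => Re (_ s * Cconj (_ s)))); auto; intros; apply Rmult_comm.
Qed.

Lemma is_derive_hform_flow (r S w : R -> R) (z1 z2 : R -> C) (t dr dS dw m p h : R) :
  is_derive r t dr -> is_derive S t dS -> is_derive w t dw ->
  r t * m = w t * p -> S t * p = 2 * h * r t -> S t * m = 2 * h * w t ->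
  is_derive z1 t (RtoC (- h) * z1 t + RtoC (- m) * z2 t)%C ->
  is_derive z2 t (RtoC p * z1 t + RtoC h * z2 t)%C ->
  is_derive (fun s => hform (r s) (S s) (w s) (z1 s) (z2 s)) t (hform dr dS dw (z1 t) (z2 t)).
Proof.
  intros Hr HS Hw Hrm HSp HSm Hz1 Hz2.
  pose proof (is_derive_hform r S w z1 z2 t dr dS dw _ _ Hr HS Hw Hz1 Hz2) as H.
  match type of H with is_derive _ _ ?d => assert (E : d = hform dr dS dw (z1 t) (z2 t)) end.
  { destruct (z1 t) as [a1 b1], (z2 t) as [a2 b2]; unfold Re, RtoC; simpl.
    transitivity (hform dr dS dw (a1, b1) (a2, b2)
                  + (a1 ^ 2 + b1 ^ 2) * (S t * p - 2 * h * r t)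
                  + (a2 ^ 2 + b2 ^ 2) * (2 * h * w t - S t * m)
                  + 2 * (a1 * a2 + b1 * b2) * (w t * p - r t * m)); [ring |].
    rewrite HSp, HSm, Hrm; ring. }
  rewrite E in H; exact H.
Qed.

Lemma right_cont0_Re (z : R -> C) :
  filterlim z (at_right 0) (locally (z 0)) -> right_cont0 (fun t => Re (z t)).
Proof.
  intros Hz; eapply filterlim_comp; [exact Hz |].
  apply (linear_cont (K := R_AbsRing)
           (U := prod_NormedModule R_AbsRing R_NormedModule R_NormedModule) (fun u => Re u)).
  apply is_linear_fst.
Qed.

Lemma right_cont0_Im (z : R -> C) :
  filterlim z (at_right 0) (locally (z 0)) -> right_cont0 (fun t => Im (z t)).
Proof.
  intros Hz; eapply filterlim_comp; [exact Hz |].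
  apply (linear_cont (K := R_AbsRing)
           (U := prod_NormedModule R_AbsRing R_NormedModule R_NormedModule) (fun u => Im u)).
  apply is_linear_snd.
Qed.

Lemma right_cont0_hform (r S w : R -> R) (z1 z2 : R -> C) :
  right_cont0 r -> right_cont0 S -> right_cont0 w ->
  filterlim z1 (at_right 0) (locally (z1 0)) -> filterlim z2 (at_right 0) (locally (z2 0)) ->
  right_cont0 (fun t => hform (r t) (S t) (w t) (z1 t) (z2 t)).
Proof.
  intros Hr HS Hw Hz1 Hz2.
  apply right_cont0_ext with (fun t =>
    r t * (Re (z1 t) * Re (z1 t) + Im (z1 t) * Im (z1 t))
    + S t * (Re (z1 t) * Re (z2 t) + Im (z1 t) * Im (z2 t))
    + w t * (Re (z2 t) * Re (z2 t) + Im (z2 t) * Im (z2 t))).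
  { intros t; rewrite hform_components; ring. }
  pose proof (right_cont0_Re z1 Hz1); pose proof (right_cont0_Im z1 Hz1).
  pose proof (right_cont0_Re z2 Hz2); pose proof (right_cont0_Im z2 Hz2).
  repeat first [ apply right_cont0_plus | apply right_cont0_mult | assumption ].
Qed.

(** * The coefficients as functions of alpha *)

(* With c = sqrt(T_+/m_+), B = 4 pi e^2/sqrt(m_+ T_+), g = 4 pi e^2/T_- and q = k^2 one has
   m_1 = c alpha^(1/2) and p_1 = B alpha^(1/2)/(alpha + g) + 2q/(c alpha^(3/2)) + c alpha^(1/2),
   so p_1/m_1 = p_over_m alpha and m_1 p_1 = m_times_p alpha; the primed functions are their
   alpha-derivatives.  hcoef alpha alpha' is h_1, and hcoef' is its time derivative
   (alpha'' = 2q). *)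
Section CoefficientBounds.
Variables c B g q : R.

Definition p_over_m (a : R) : R := 1 + B / (c * (a + g)) + 2 * q / (c ^ 2 * a ^ 2).
Definition p_over_m' (a : R) : R := - B / (c * (a + g) ^ 2) - 4 * q / (c ^ 2 * a ^ 3).
Definition m_times_p (a : R) : R := c * B * a / (a + g) + 2 * q / a + c ^ 2 * a.
Definition m_times_p' (a : R) : R := c * B * g / (a + g) ^ 2 - 2 * q / a ^ 2 + c ^ 2.
Definition hcoef (a da : R) : R := / 4 * / a * da.
Definition hcoef' (a da : R) : R := (2 * q * a - da ^ 2) / (4 * a ^ 2).

Hypotheses (hc : 0 < c) (hB : 0 < B) (hg : 0 < g) (hq : 1 <= q).

Lemma is_derive_p_over_m (a : R) : 0 < a -> is_derive p_over_m a (p_over_m' a).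
Proof. intros Ha; unfold p_over_m, p_over_m'; auto_derive; [positivity | field; positivity]. Qed.

Lemma is_derive_m_times_p (a : R) : 0 < a -> is_derive m_times_p a (m_times_p' a).
Proof. intros Ha; unfold m_times_p, m_times_p'; auto_derive; [positivity | field; positivity]. Qed.

Variable a : R.
Hypothesis hqa : q <= a.

Lemma p_over_m_ge_1 : 1 <= p_over_m a.
Proof.
  unfold p_over_m.
  assert (0 < B / (c * (a + g))) by (apply Rdiv_lt_0_compat; nra).
  assert (0 < 2 * q / (c ^ 2 * a ^ 2)) by (apply Rdiv_lt_0_compat; positivity).
  lra.
Qed.

Lemma p_over_m_le : p_over_m a <= 1 + B / (c * g) + 2 / c ^ 2.
Proof.
  unfold p_over_m.
  assert (B / (c * (a + g)) <= B / (c * g)).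
  { apply Rdiv_le_cross; [positivity | positivity |]. assert (0 < B * c) by positivity. nra. }
  assert (2 * q / (c ^ 2 * a ^ 2) <= 2 / c ^ 2).
  { apply Rdiv_le_cross; [positivity | positivity |].
    assert (0 < c ^ 2) by positivity. assert (q <= a ^ 2) by nra. nra. }
  lra.
Qed.

Lemma m_times_p_ge_lin : c ^ 2 * a <= m_times_p a.
Proof.
  unfold m_times_p.
  assert (0 < c * B * a / (a + g)) by (apply Rdiv_lt_0_compat; positivity).
  assert (0 < 2 * q / a) by (apply Rdiv_lt_0_compat; lra).
  lra.
Qed.

Lemma m_times_p_ge_inv : 2 * q / a <= m_times_p a.
Proof.
  unfold m_times_p.
  assert (0 < c * B * a / (a + g)) by (apply Rdiv_lt_0_compat; positivity).
  assert (0 < c ^ 2 * a) by positivity.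
  lra.
Qed.

Variable da : R.
Hypothesis hda : da ^ 2 <= 4 * q * (a - q).

Lemma abs_da_le : Rabs da <= a.
Proof.
  assert (Hsq : Rsqr da <= Rsqr a) by (pose proof (pow2_ge_0 (a - 2 * q)); unfold Rsqr; nra).
  apply Rsqr_le_abs_0 in Hsq; rewrite (Rabs_right a) in Hsq by lra; exact Hsq.
Qed.

Lemma abs_dp_over_m_le : Rabs (da * p_over_m' a) <= (B / c + 4 / c ^ 2) * (q / a).
Proof.
  pose proof abs_da_le as Hda.
  assert (HB1 : 0 <= B / (c * (a + g) ^ 2)) by (apply Rlt_le, Rdiv_lt_0_compat; positivity).
  assert (HB2 : 0 <= 4 * q / (c ^ 2 * a ^ 3)) by (apply Rlt_le, Rdiv_lt_0_compat; positivity).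
  assert (E1 : a * (B / (c * (a + g) ^ 2)) <= B / c * (q / a)).
  { replace (a * (B / (c * (a + g) ^ 2))) with (a * B / (c * (a + g) ^ 2)) by (field; positivity).
    replace (B / c * (q / a)) with (B * q / (c * a)) by (field; positivity).
    apply Rdiv_le_cross; [positivity | positivity |].
    assert (a * a <= q * (a + g) ^ 2) by nra. assert (0 < B * c) by nra. nra. }
  assert (E2 : a * (4 * q / (c ^ 2 * a ^ 3)) <= 4 / c ^ 2 * (q / a)).
  { replace (a * (4 * q / (c ^ 2 * a ^ 3))) with (4 * q / (c ^ 2 * a ^ 2)) by (field; positivity).
    replace (4 / c ^ 2 * (q / a)) with (4 * q / (c ^ 2 * a)) by (field; positivity).
    apply Rdiv_le_cross; [positivity | positivity |].
    assert (0 < 4 * q * c ^ 2) by positivity. assert (a <= a ^ 2) by nra. nra. }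
  replace (p_over_m' a) with (- (B / (c * (a + g) ^ 2) + 4 * q / (c ^ 2 * a ^ 3)))
    by (unfold p_over_m'; field; positivity).
  rewrite Rabs_mult, Rabs_Ropp, (Rabs_right (_ + _)) by lra.
  apply Rle_trans with (a * (B / (c * (a + g) ^ 2) + 4 * q / (c ^ 2 * a ^ 3))); [| lra].
  apply Rmult_le_compat_r; lra.
Qed.

Lemma hcoef_sq_le : 4 * hcoef a da ^ 2 <= m_times_p a.
Proof.
  apply Rle_trans with (2 * q / a); [| apply m_times_p_ge_inv].
  unfold hcoef; replace (4 * (/ 4 * / a * da) ^ 2) with (da ^ 2 / (4 * a ^ 2)) by (field; lra).
  apply Rdiv_le_cross; nra.
Qed.

Lemma abs_hcoef'_le : Rabs (2 * hcoef' a da) <= q / a.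
Proof.
  unfold hcoef'.
  replace (2 * ((2 * q * a - da ^ 2) / (4 * a ^ 2))) with (q / a - da ^ 2 / (2 * a ^ 2))
    by (field; lra).
  assert (0 <= da ^ 2 / (2 * a ^ 2)) by (apply Rdiv_le_0_compat; positivity || nra).
  assert (da ^ 2 / (2 * a ^ 2) <= 2 * (q / a)).
  { replace (2 * (q / a)) with (2 * q / a) by (field; lra). apply Rdiv_le_cross; nra. }
  apply Rabs_le; lra.
Qed.

Lemma abs_hcoef_dm_times_p_le :
  Rabs (hcoef a da * (da * m_times_p' a)) <= q * (c * B / g + c ^ 2) + q * (2 * q / a ^ 2).
Proof.
  replace (hcoef a da * (da * m_times_p' a)) with (da ^ 2 / (4 * a) * m_times_p' a)
    by (unfold hcoef; field; lra).
  assert (Hh0 : 0 <= da ^ 2 / (4 * a)) by (apply Rdiv_le_0_compat; [nra | lra]).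
  assert (Hh1 : da ^ 2 / (4 * a) <= q) by (apply Rle_div_l; lra || nra).
  assert (Hg : c * B * g / (a + g) ^ 2 <= c * B / g).
  { apply Rdiv_le_cross; [positivity | lra |].
    replace (c * B * g * g) with (c * B * (g * g)) by ring.
    apply Rmult_le_compat_l; [apply Rlt_le; positivity | nra]. }
  assert (0 <= c * B * g / (a + g) ^ 2) by (apply Rlt_le; positivity).
  assert (0 <= 2 * q / a ^ 2) by (apply Rlt_le; positivity).
  assert (Rabs (m_times_p' a) <= c * B / g + c ^ 2 + 2 * q / a ^ 2)
    by (unfold m_times_p'; apply Rabs_le; split; nra).
  rewrite Rabs_mult, (Rabs_right (_ / _)) by lra.
  apply Rle_trans with (q * (c * B / g + c ^ 2 + 2 * q / a ^ 2)); [| lra].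
  apply Rmult_le_compat; [lra | apply Rabs_pos | lra | lra].
Qed.

Lemma abs_deriv_cross_weight_le :
  Rabs (2 * hcoef' a da / sqrt (m_times_p a)
        - hcoef a da * (da * m_times_p' a) / (m_times_p a * sqrt (m_times_p a)))
  <= (3 / c + B / (c ^ 2 * g)) * (q / a).
Proof.
  pose proof m_times_p_ge_lin as HMlin; pose proof m_times_p_ge_inv as HMinv.
  set (M := m_times_p a) in *.
  assert (HM : 0 < M) by (assert (0 < c ^ 2 * a) by positivity; lra).
  assert (Hsm : c <= sqrt M).
  { rewrite <- (sqrt_pow2 c) by lra; apply sqrt_le_1_alt.
    assert (0 < c ^ 2) by positivity. nra. }
  assert (Hrate : 0 < q / a) by positivity.
  assert (Hterm1 : Rabs (2 * hcoef' a da / sqrt M) <= 1 / c * (q / a)).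
  { unfold Rdiv at 1; rewrite Rabs_mult, (Rabs_right (/ _)) by (apply Rle_ge, Rlt_le; positivity).
    apply Rle_trans with (q / a * / c); [| right; field; lra].
    apply Rmult_le_compat; [apply Rabs_pos | apply Rlt_le; positivity | apply abs_hcoef'_le |].
    apply Rinv_le_contravar; lra. }
  assert (Hlin : / (M * sqrt M) <= / (c ^ 2 * a * c))
    by (apply Rinv_le_contravar; [positivity | nra]).
  assert (Hinv : / (M * sqrt M) <= / (2 * q / a * c))
    by (apply Rinv_le_contravar; [positivity | nra]).
  assert (Hterm2 : Rabs (hcoef a da * (da * m_times_p' a) / (M * sqrt M))
                   <= (2 / c + B / (c ^ 2 * g)) * (q / a)).
  { unfold Rdiv at 1; rewrite Rabs_mult, (Rabs_right (/ _)) by (apply Rle_ge, Rlt_le; positivity).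
    pose proof abs_hcoef_dm_times_p_le as Hnum.
    assert (0 <= q * (c * B / g + c ^ 2)) by (apply Rlt_le; positivity).
    assert (0 <= q * (2 * q / a ^ 2)) by (apply Rlt_le; positivity).
    assert (0 <= / (M * sqrt M)) by (apply Rlt_le; positivity).
    apply Rle_trans with (q * (c * B / g + c ^ 2) * / (c ^ 2 * a * c)
                          + q * (2 * q / a ^ 2) * / (2 * q / a * c)).
    - apply Rle_trans with ((q * (c * B / g + c ^ 2) + q * (2 * q / a ^ 2)) * / (M * sqrt M)).
      + apply Rmult_le_compat_r; [lra | exact Hnum].
      + rewrite Rmult_plus_distr_r; apply Rplus_le_compat; apply Rmult_le_compat_l; lra.
    - right; field; repeat split; lra. }
  eapply Rle_trans; [apply Rabs_triang |]; rewrite Rabs_Ropp.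
  replace ((3 / c + B / (c ^ 2 * g)) * (q / a))
    with (1 / c * (q / a) + (2 / c + B / (c ^ 2 * g)) * (q / a)) by (field; lra).
  apply Rplus_le_compat; assumption.
Qed.
End CoefficientBounds.

(** * The ion system *)

Lemma is_derive_neg_atan_shear (k xi t : R) : k <> 0 ->
  is_derive (fun s => - atan ((xi - k * s) / k)) t (k ^ 2 / (k ^ 2 + (xi - k * t) ^ 2)).
Proof.
  intros Hk; auto_derive; [exact I |].
  assert (0 < k ^ 2 + (xi - k * t) ^ 2) by (pose proof (pow2_ge_0 (xi - k * t)); nra).
  field; split; [lra | exact Hk].
Qed.

Lemma IZR_sq_ge_1 (k : Z) : k <> 0%Z -> 1 <= IZR k ^ 2.
Proof.
  intros Hk; replace (IZR k ^ 2) with (IZR (k * k)) by (rewrite mult_IZR; ring).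
  apply IZR_le; nia.
Qed.

Lemma alpha_ge (k : Z) (xi t : R) : IZR k ^ 2 <= alpha k xi t.
Proof. unfold alpha; pose proof (pow2_ge_0 (xi - IZR k * t)); lra. Qed.

Lemma dalpha_sq (k : Z) (xi t : R) :
  dalpha k xi t ^ 2 <= 4 * IZR k ^ 2 * (alpha k xi t - IZR k ^ 2).
Proof. unfold dalpha, alpha; right; ring. Qed.

Lemma is_derive_alpha (k : Z) (xi t : R) : is_derive (alpha k xi) t (dalpha k xi t).
Proof. unfold alpha, dalpha; auto_derive; [exact I | ring]. Qed.

Lemma is_derive_hcoef_alpha (k : Z) (xi t : R) : k <> 0%Z ->
  is_derive (fun s => hcoef (alpha k xi s) (dalpha k xi s)) t
    (hcoef' (IZR k ^ 2) (alpha k xi t) (dalpha k xi t)).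
Proof.
  intros Hk.
  assert (0 < alpha k xi t) by (pose proof (alpha_ge k xi t); pose proof (IZR_sq_ge_1 k Hk); lra).
  unfold hcoef, hcoef', alpha, dalpha in *; auto_derive; [lra | field; lra].
Qed.

Lemma energy_weight_identities (m p h : R) : 0 < m -> 0 < p ->
  sqrt (p / m) * m = sqrt (m / p) * p /\
  2 * h / sqrt (m * p) * p = 2 * h * sqrt (p / m) /\
  2 * h / sqrt (m * p) * m = 2 * h * sqrt (m / p) /\
  sqrt (p / m) * sqrt (m / p) = 1.
Proof.
  intros Hm Hp.
  rewrite !sqrt_div_alt, sqrt_mult_alt by lra.
  pose proof (sqrt_lt_R0 m Hm); pose proof (sqrt_lt_R0 p Hp).
  pose proof (sqrt_sqrt m (Rlt_le _ _ Hm)); pose proof (sqrt_sqrt p (Rlt_le _ _ Hp)).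
  repeat split; field_simplify_eq; try lra; nra.
Qed.

Section IonCoefficients.
Variables (e mp Tp Tm : R).
Hypotheses (he : 0 < e) (hmp : 0 < mp) (hTp : 0 < Tp) (hTm : 0 < Tm).

Definition coef_c : R := sqrt (Tp / mp).
Definition coef_B : R := 4 * PI * e ^ 2 / sqrt (mp * Tp).
Definition coef_g : R := 4 * PI * e ^ 2 / Tm.

Lemma coef_c_pos : 0 < coef_c.
Proof. apply sqrt_lt_R0, Rdiv_lt_0_compat; lra. Qed.

Lemma coef_B_pos : 0 < coef_B.
Proof. pose proof PI_RGT_0; apply Rdiv_lt_0_compat; positivity. Qed.

Lemma coef_g_pos : 0 < coef_g.
Proof. pose proof PI_RGT_0; apply Rdiv_lt_0_compat; positivity. Qed.

Definition rate_const : R :=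
  coef_B / coef_c + 4 / coef_c ^ 2 + 3 / coef_c + coef_B / (coef_c ^ 2 * coef_g).
Definition weight1_max : R := 1 + coef_B / (coef_c * coef_g) + 2 / coef_c ^ 2.

Lemma rate_const_pos : 0 < rate_const.
Proof.
  pose proof coef_c_pos; pose proof coef_B_pos; pose proof coef_g_pos.
  unfold rate_const; positivity.
Qed.

Lemma weight1_max_ge_1 : 1 <= weight1_max.
Proof.
  pose proof coef_c_pos; pose proof coef_B_pos; pose proof coef_g_pos.
  assert (0 < coef_B / (coef_c * coef_g)) by positivity.
  assert (0 < 2 / coef_c ^ 2) by positivity.
  unfold weight1_max; lra.
Qed.

Definition energy_factor : R := exp (rate_const * PI).
Definition norm_factor : R := sqrt (3 * energy_factor) * weight1_max.

Lemma energy_factor_ge_1 : 1 <= energy_factor.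
Proof.
  unfold energy_factor; rewrite <- exp_0; apply exp_le_compat.
  pose proof rate_const_pos; pose proof PI_RGT_0; nra.
Qed.

Lemma norm_factor_ge_1 : 1 <= norm_factor.
Proof.
  pose proof energy_factor_ge_1; pose proof weight1_max_ge_1.
  assert (1 <= sqrt (3 * energy_factor)) by (rewrite <- sqrt_1; apply sqrt_le_1_alt; lra).
  unfold norm_factor; nra.
Qed.

Variables (k : Z) (xi : R).
Hypothesis (hk : k <> 0%Z).

Let q := IZR k ^ 2.
Let al := alpha k xi.
Let R_of t := p_over_m coef_c coef_B coef_g q (al t).
Let M_of t := m_times_p coef_c coef_B coef_g q (al t).

Lemma alpha_pos t : 0 < al t.
Proof. pose proof (alpha_ge k xi t); pose proof (IZR_sq_ge_1 k hk); unfold al; lra. Qed.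

Lemma m1_p1_closed_forms t :
  0 < m1 mp Tp k xi t /\ 0 < p1 e mp Tp Tm k xi t /\
  p1 e mp Tp Tm k xi t / m1 mp Tp k xi t = R_of t /\
  m1 mp Tp k xi t * p1 e mp Tp Tm k xi t = M_of t.
Proof.
  pose proof (alpha_pos t) as Ha.
  pose proof coef_c_pos; pose proof coef_B_pos; pose proof coef_g_pos.
  assert (Hc : sqrt (mp / Tp) = / coef_c)
    by (unfold coef_c; rewrite <- sqrt_inv; f_equal; field; lra).
  unfold m1, p1, R_of, M_of, p_over_m, m_times_p; rewrite Hc; fold coef_c coef_B.
  replace (4 * PI * e ^ 2 / Tm) with coef_g by reflexivity.
  fold (al t); fold q.
  pose proof (sqrt_lt_R0 _ Ha) as Hu; pose proof (pow2_sqrt _ (Rlt_le _ _ Ha)) as Hu2.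
  set (u := sqrt (al t)) in *; rewrite <- Hu2.
  assert (0 < q) by (pose proof (IZR_sq_ge_1 k hk); unfold q; lra).
  assert (Hp : 0 < coef_B * (u / (u ^ 2 + coef_g)) + / coef_c * (2 * q / u ^ 3) + coef_c * u)
    by positivity.
  repeat split; [positivity | lra | field; positivity | field; positivity].
Qed.

Definition weight1 t := sqrt (p1 e mp Tp Tm k xi t / m1 mp Tp k xi t).
Definition weight2 t := sqrt (m1 mp Tp k xi t / p1 e mp Tp Tm k xi t).
Definition weight12 t := 2 * h1 k xi t / sqrt (m1 mp Tp k xi t * p1 e mp Tp Tm k xi t).

Let dR_of t := dalpha k xi t * p_over_m' coef_c coef_B coef_g q (al t).
Let dM_of t := dalpha k xi t * m_times_p' coef_c coef_B coef_g q (al t).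

Definition dweight1 t := dR_of t / (2 * sqrt (R_of t)).
Definition dweight2 t := - dweight1 t / sqrt (R_of t) ^ 2.
Definition dweight12 t :=
  2 * hcoef' q (al t) (dalpha k xi t) / sqrt (M_of t)
  - hcoef (al t) (dalpha k xi t) * dM_of t / (M_of t * sqrt (M_of t)).

Ltac coef_hyps :=
  unfold q, al; auto using coef_c_pos, coef_B_pos, coef_g_pos, IZR_sq_ge_1, alpha_ge, dalpha_sq.

Lemma R_of_ge_1 t : 1 <= R_of t.
Proof. apply p_over_m_ge_1; coef_hyps. Qed.

Lemma M_of_pos t : 0 < M_of t.
Proof.
  pose proof (alpha_pos t); pose proof coef_c_pos.
  eapply Rlt_le_trans; [| apply m_times_p_ge_lin]; [positivity | coef_hyps ..].
Qed.

Lemma weight1_eq t : weight1 t = sqrt (R_of t).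
Proof. unfold weight1; now rewrite (proj1 (proj2 (proj2 (m1_p1_closed_forms t)))). Qed.

Lemma weight2_eq t : weight2 t = / sqrt (R_of t).
Proof.
  destruct (m1_p1_closed_forms t) as [Hm [Hp [HR _]]].
  unfold weight2; rewrite <- sqrt_inv, <- HR; f_equal; field; lra.
Qed.

Lemma weight12_eq t : weight12 t = 2 * hcoef (al t) (dalpha k xi t) / sqrt (M_of t).
Proof. unfold weight12; now rewrite (proj2 (proj2 (proj2 (m1_p1_closed_forms t)))). Qed.

Lemma is_derive_R_of t : is_derive R_of t (dR_of t).
Proof.
  apply (is_derive_comp (p_over_m coef_c coef_B coef_g q) al).
  - apply is_derive_p_over_m; [exact coef_c_pos | exact coef_g_pos | apply alpha_pos].
  - apply is_derive_alpha.
Qed.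

Lemma is_derive_M_of t : is_derive M_of t (dM_of t).
Proof.
  apply (is_derive_comp (m_times_p coef_c coef_B coef_g q) al).
  - apply is_derive_m_times_p; [exact coef_g_pos | apply alpha_pos].
  - apply is_derive_alpha.
Qed.

Lemma is_derive_weight1 t : is_derive weight1 t (dweight1 t).
Proof.
  apply is_derive_ext with (fun s => sqrt (R_of s)); [intros s; symmetry; apply weight1_eq |].
  apply is_derive_sqrt; [apply is_derive_R_of | pose proof (R_of_ge_1 t); lra].
Qed.

Lemma is_derive_weight2 t : is_derive weight2 t (dweight2 t).
Proof.
  apply is_derive_ext with (fun s => / sqrt (R_of s)); [intros s; symmetry; apply weight2_eq |].
  pose proof (R_of_ge_1 t).
  apply (is_derive_inv (fun s => sqrt (R_of s))); [| apply Rgt_not_eq; positivity].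
  apply is_derive_sqrt; [apply is_derive_R_of | lra].
Qed.

Lemma is_derive_weight12 t : is_derive weight12 t (dweight12 t).
Proof.
  apply is_derive_ext with (fun s => 2 * hcoef (al s) (dalpha k xi s) / sqrt (M_of s));
    [intros s; symmetry; apply weight12_eq |].
  pose proof (M_of_pos t) as HM.
  assert (E : dweight12 t
             = (2 * hcoef' q (al t) (dalpha k xi t) * sqrt (M_of t)
                - 2 * hcoef (al t) (dalpha k xi t) * (dM_of t / (2 * sqrt (M_of t))))
               / sqrt (M_of t) ^ 2).
  { assert (Hsm : 0 < sqrt (M_of t)) by positivity.
    pose proof (pow2_sqrt _ (Rlt_le _ _ HM)) as HM2.
    unfold dweight12; set (sm := sqrt (M_of t)) in *; set (Mt := M_of t) in *; clearbody sm Mt.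
    subst Mt; field; lra. }
  rewrite E.
  apply (is_derive_div (fun s => 2 * hcoef (al s) (dalpha k xi s)) (fun s => sqrt (M_of s)));
    [| | apply Rgt_not_eq; positivity].
  - apply is_derive_scal, is_derive_hcoef_alpha, hk.
  - apply is_derive_sqrt; [apply is_derive_M_of | exact HM].
Qed.

Lemma weight1_pos t : 0 < weight1 t.
Proof. rewrite weight1_eq; pose proof (R_of_ge_1 t); positivity. Qed.

Lemma weight_identities t :
  weight1 t * m1 mp Tp k xi t = weight2 t * p1 e mp Tp Tm k xi t /\
  weight12 t * p1 e mp Tp Tm k xi t = 2 * h1 k xi t * weight1 t /\
  weight12 t * m1 mp Tp k xi t = 2 * h1 k xi t * weight2 t /\
  weight1 t * weight2 t = 1.
Proof.
  destruct (m1_p1_closed_forms t) as [Hm [Hp _]].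
  exact (energy_weight_identities _ _ (h1 k xi t) Hm Hp).
Qed.

Lemma weight12_sq_le t : weight12 t ^ 2 <= 1.
Proof.
  pose proof (M_of_pos t) as HM.
  rewrite weight12_eq.
  replace ((2 * hcoef (al t) (dalpha k xi t) / sqrt (M_of t)) ^ 2)
    with (4 * hcoef (al t) (dalpha k xi t) ^ 2 / M_of t)
    by (rewrite <- (pow2_sqrt (M_of t)) at 1 by lra; field; apply Rgt_not_eq; positivity).
  apply (Rdiv_le_1 _ _ HM), hcoef_sq_le; coef_hyps.
Qed.

Let rho t := (coef_B / coef_c + 4 / coef_c ^ 2) * (q / al t) / 2.
Let sigma t := (3 / coef_c + coef_B / (coef_c ^ 2 * coef_g)) * (q / al t).

Lemma abs_dweight1_le t : Rabs (dweight1 t) <= rho t * weight1 t.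
Proof.
  unfold rho; rewrite weight1_eq; unfold dweight1; apply abs_deriv_sqrt_le; [apply R_of_ge_1 |].
  apply abs_dp_over_m_le; coef_hyps.
Qed.

Lemma abs_dweight2_le t : Rabs (dweight2 t) <= rho t * weight2 t.
Proof.
  rewrite weight2_eq; unfold dweight2; rewrite <- weight1_eq.
  apply abs_deriv_inv_le; [apply weight1_pos | apply abs_dweight1_le].
Qed.

Lemma abs_dweight12_le t : Rabs (dweight12 t) <= sigma t.
Proof. apply abs_deriv_cross_weight_le; coef_hyps. Qed.

Lemma weight1_range t : 1 <= weight1 t <= weight1_max.
Proof.
  rewrite weight1_eq; pose proof (R_of_ge_1 t).
  assert (1 <= sqrt (R_of t)) by (rewrite <- sqrt_1; apply sqrt_le_1_alt; lra).
  split; [lra |].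
  apply Rle_trans with (R_of t); [| apply p_over_m_le; coef_hyps].
  pose proof (sqrt_sqrt (R_of t)); nra.
Qed.

Definition shear_angle t : R := - atan ((xi - IZR k * t) / IZR k).

Lemma is_derive_shear_angle t : is_derive shear_angle t (q / al t).
Proof. apply is_derive_neg_atan_shear, not_0_IZR, hk. Qed.

Lemma shear_angle_variation t : shear_angle t - shear_angle 0 <= PI.
Proof.
  unfold shear_angle.
  pose proof (atan_bound ((xi - IZR k * t) / IZR k)).
  pose proof (atan_bound ((xi - IZR k * 0) / IZR k)).
  lra.
Qed.

Variables A1 A2 : R -> C.
Hypothesis hsol : is_solution e mp Tp Tm k xi A1 A2.

Let E := Energy_plus e mp Tp Tm k xi A1 A2.

Lemma energy_as_hform t : E t = hform (weight1 t) (weight12 t) (weight2 t) (A1 t) (A2 t).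
Proof. reflexivity. Qed.

Lemma is_derive_energy t : 0 < t ->
  is_derive E t (hform (dweight1 t) (dweight12 t) (dweight2 t) (A1 t) (A2 t)).
Proof.
  intros Ht; destruct ((proj1 hsol) t Ht) as [HA1 HA2].
  destruct (weight_identities t) as [I1 [I2 [I3 _]]].
  eapply is_derive_ext; [intros s; symmetry; apply energy_as_hform |].
  exact (is_derive_hform_flow weight1 weight12 weight2 A1 A2 t _ _ _ _ _ _
           (is_derive_weight1 t) (is_derive_weight12 t) (is_derive_weight2 t) I1 I2 I3 HA1 HA2).
Qed.

Lemma energy_rate_bound t :
  Rabs (hform (dweight1 t) (dweight12 t) (dweight2 t) (A1 t) (A2 t))
  <= rate_const * (q / al t) * E t.
Proof.
  destruct (weight_identities t) as [_ [_ [_ Hw]]].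
  replace (rate_const * (q / al t)) with (2 * rho t + sigma t)
    by (unfold rho, sigma, rate_const; field; pose proof (alpha_pos t); pose proof coef_c_pos;
        pose proof coef_g_pos; repeat split; lra).
  apply hform_rate_bound;
    [apply weight1_pos | exact Hw | apply weight12_sq_le | apply abs_dweight1_le
    | apply abs_dweight2_le | apply abs_dweight12_le].
Qed.

Lemma energy_right_cont0 : right_cont0 E.
Proof.
  destruct hsol as [_ [H1 H2]].
  apply right_cont0_hform; auto; apply ex_derive_right_cont0; eexists;
    [apply is_derive_weight1 | apply is_derive_weight12 | apply is_derive_weight2].
Qed.

Lemma energy_norm_equiv t :
  normA A1 A2 t ^ 2 <= 2 * weight1_max * E t /\ 2 * E t <= 3 * weight1_max * normA A1 A2 t ^ 2.
Proof.
  unfold normA; rewrite pow2_sqrt by (apply Rplus_le_le_0_compat; apply pow2_ge_0).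
  destruct (weight_identities t) as [_ [_ [_ Hw]]].
  apply hform_norm_equiv;
    [apply weight1_range | apply weight1_range | exact Hw | apply weight12_sq_le].
Qed.

Lemma energy_comparison t : 0 <= t ->
  E t <= energy_factor * E 0 /\ E 0 <= energy_factor * E t.
Proof.
  pose proof rate_const_pos as HK.
  apply (gronwall_two_sided E
           (fun s => hform (dweight1 s) (dweight12 s) (dweight2 s) (A1 s) (A2 s))
           (fun s => rate_const * shear_angle s) (fun s => rate_const * (q / al s))).
  - exact is_derive_energy.
  - intros s; apply is_derive_scal, is_derive_shear_angle.
  - intros s _; apply energy_rate_bound.
  - exact energy_right_cont0.
  - intros s; pose proof (energy_norm_equiv s) as [H _].
    pose proof (pow2_ge_0 (normA A1 A2 s)); pose proof (weight1_range 0). nra.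
  - intros s _; pose proof (shear_angle_variation s); nra.
Qed.

Lemma normA_comparison t : 0 <= t ->
  normA A1 A2 t <= norm_factor * normA A1 A2 0 /\ normA A1 A2 0 <= norm_factor * normA A1 A2 t.
Proof.
  intros Ht; destruct (energy_comparison t Ht) as [HEt HE0].
  destruct (energy_norm_equiv 0) as [Hn0 HE0n], (energy_norm_equiv t) as [Hnt HEtn].
  pose proof energy_factor_ge_1; pose proof weight1_max_ge_1.
  assert (Hsq : forall s, normA A1 A2 s = sqrt (normA A1 A2 s ^ 2))
    by (intros s; rewrite sqrt_pow2; [reflexivity | apply sqrt_pos]).
  rewrite (Hsq 0), (Hsq t); unfold norm_factor.
  split; eapply sqrt_comparison_transfer; eauto; try lra; apply pow2_ge_0.
Qed.
End IonCoefficients.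

Theorem lemma3p1 (e mp Tp Tm : R) (he : 0 < e) (hmp : 0 < mp) (hTp : 0 < Tp) (hTm : 0 < Tm) :
  exists C1 C1' C2 C2' : R,
    0 < C1 /\ C1 <= C1' /\ 0 < C2 /\ C2 <= C2' /\
    forall (k : Z) (xi : R) (A1 A2 : R -> C),
      k <> 0%Z ->
      is_solution e mp Tp Tm k xi A1 A2 ->
      forall t : R, 0 <= t ->
        C1 * Energy_plus e mp Tp Tm k xi A1 A2 0 <= Energy_plus e mp Tp Tm k xi A1 A2 t /\
        Energy_plus e mp Tp Tm k xi A1 A2 t <= C1' * Energy_plus e mp Tp Tm k xi A1 A2 0 /\
        C2 * normA A1 A2 0 <= normA A1 A2 t /\
        normA A1 A2 t <= C2' * normA A1 A2 0.
Proof.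
  pose proof (energy_factor_ge_1 e mp Tp Tm he hmp hTp hTm) as HG.
  pose proof (norm_factor_ge_1 e mp Tp Tm he hmp hTp hTm) as HD.
  set (G := energy_factor e mp Tp Tm) in *; set (D := norm_factor e mp Tp Tm) in *.
  pose proof (Rinv_le_self G HG); pose proof (Rinv_le_self D HD).
  exists (/ G), G, (/ D), D.
  do 4 (split; [lra |]).
  intros k xi A1 A2 hk hsol t Ht.
  destruct (energy_comparison e mp Tp Tm he hmp hTp hTm k xi hk A1 A2 hsol t Ht) as [HEt HE0].
  destruct (normA_comparison e mp Tp Tm he hmp hTp hTm k xi hk A1 A2 hsol t Ht) as [HNt HN0].
  fold G in HEt, HE0; fold D in HNt, HN0.
  repeat split; try apply Rinv_mul_le; lra.
Qed.
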